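(* Let $n\geq 2$. If $A$ is an $L_n$-good $n\times n$ matrix, then no column of $A$ has entries equal to $1$ in both the first row and the last row.
   Context: For $n\geq 2$, $L_n$ is the set of vectors $\vec{x}=(x_1,\ldots,x_n)\in\mathbb{Z}_2^n$ with no $i\in\{1,\ldots,n-1\}$ such that $x_i=x_{i+1}=1$, and with not both $x_1=1$ and $x_n=1$. An $n\times n$ matrix $A$ over $\mathbb{Z}_2$ is $L_n$-good if it is invertible and $A\vec{x}\in L_n$ for all $\vec{x}\in L_n$. *)

From mathcomp Require Import all_boot all_algebra.
Set Implicit Arguments. Unset Strict Implicit. Unset Printing Implicit Defensive.
Import GRing.Theory.
Local Open Scope ring_scope.

(* Z_2 is 'F_2.  Vectors of Z_2^n are column vectors 'cV['F_2]_n,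
   indices 'I_n correspond to 1..n via i |-> i+1. *)

Definition inL (n : nat) (x : 'cV['F_2]_n) : Prop :=
  (forall i j : 'I_n, (j : nat) = i.+1 -> ~ (x i 0 = 1 /\ x j 0 = 1)) /\
  (forall i j : 'I_n, (i : nat) = 0%N -> (j : nat) = n.-1 ->
       ~ (x i 0 = 1 /\ x j 0 = 1)).

Definition L_good (n : nat) (A : 'M['F_2]_n) : Prop :=
  A \in unitmx /\ forall x : 'cV['F_2]_n, inL x -> inL (A *m x).

From mathcomp Require Import all_boot all_algebra.
From mathcomp Require Import zify.
Import GRing.Theory.
Local Open Scope ring_scope.

(* The standard basis vector e_j lies in L_n (this needs n >= 2), and A e_j is
   the j-th column of A, so every column of an L_n-good matrix lies in L_n. *)

Lemma delta_mx_col_eq1 (n : nat) (j i : 'I_n) :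
  (delta_mx j 0 : 'cV['F_2]_n) i 0 = 1 -> i = j.
Proof. by rewrite mxE eqxx andbT; case: eqP => // _ /eqP; rewrite oner_eq0. Qed.

Lemma delta_mx_inL (n : nat) (j : 'I_n) : (2 <= n)%N -> inL (delta_mx j 0).
Proof.
move=> n_ge2; split=> [i k ki | i k i0 kmax] [/delta_mx_col_eq1 ij /delta_mx_col_eq1 kj].
  by move: ki; rewrite ij kj => /n_Sn.
by move: i0 kmax; rewrite ij kj; lia.
Qed.

Lemma L_good_col_inL (n : nat) (A : 'M['F_2]_n) :
  (2 <= n)%N -> L_good A -> forall j : 'I_n, inL (col j A).
Proof. by move=> n_ge2 [_ AL] j; rewrite colE; apply/AL/delta_mx_inL. Qed.

Theorem lemma3 (n : nat) (hn : (2 <= n)%N) (A : 'M['F_2]_n) :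
  L_good A ->
  forall (j first last : 'I_n), (first : nat) = 0%N -> (last : nat) = n.-1 ->
    ~ (A first j = 1 /\ A last j = 1).
Proof.
move=> A_good j f l f0 lmax.
have [_ /(_ f l f0 lmax)] := @L_good_col_inL n A hn A_good j.
by rewrite !mxE.
Qed.
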